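(* Let $d>0$, $n\in\mathbb{N}$, and let $\phi_\nu, W_\nu$, $\nu=1,\ldots,n$, be continuous complex-valued functions on $[0,d]$ such that $W_n(0)=1$ and, for every $d_1$ with $0<d_1\le d$, the system $\{\phi_\nu\}_{\nu=1}^n$ is linearly independent on $[0,d_1]$. Then the operator $R$ in $L_2[0,d]$ given by $$(Rg)(x)=\sum_{\nu=1}^n\phi_\nu(x)\int_0^x W_\nu(\xi)g(\xi)\,d\xi$$ is infinite-dimensional, i.e. its range is not a finite-dimensional linear subspace. *)

From HB Require Import structures.
From mathcomp Require Import all_boot all_order all_algebra.
From mathcomp Require Import all_classical all_reals.
From mathcomp Require Import topology normedtype sequences measure
  lebesgue_measure lebesgue_integral.
From mathcomp Require Import complex.

Set Implicit Arguments.
Unset Strict Implicit.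
Unset Printing Implicit Defensive.

Import Order.TTheory GRing.Theory Num.Theory.
Local Open Scope classical_set_scope.
Local Open Scope ring_scope.

Definition ccont_on (R : realType) (a b : R) (f : R -> R[i]) : Prop :=
  forall x, a <= x <= b -> forall e : R, 0 < e ->
    exists2 delta : R, 0 < delta &
      forall y, a <= y <= b -> `|y - x| < delta ->
        `|f y - f x| < e%:C%C.

Definition lin_indep_on (R : realType) (n : nat) (a b : R)
    (f : 'I_n -> R -> R[i]) : Prop :=
  forall c : 'I_n -> R[i],
    (forall x, a <= x <= b -> \sum_(nu < n) c nu * f nu x = 0) ->
    forall nu, c nu = 0.

Definition L2_on (R : realType) (d : R) (g : R -> R[i]) : Prop :=
  measurable_fun `[0, d] (fun x => complex.Re (g x)) /\
  measurable_fun `[0, d] (fun x => complex.Im (g x)) /\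
  (\int[lebesgue_measure]_(x in `[0%R, d]%classic)
      ((complex.Re (g x)) ^+ 2 + (complex.Im (g x)) ^+ 2)%:E < +oo)%E.

Definition cint0 (R : realType) (x : R) (f : R -> R[i]) : R[i] :=
  ((Rintegral lebesgue_measure `[0, x] (fun t => complex.Re (f t)))%:C
   + 'i * (Rintegral lebesgue_measure `[0, x] (fun t => complex.Im (f t)))%:C)%C.

Definition Rop (R : realType) (n : nat) (phi W : 'I_n -> R -> R[i])
    (g : R -> R[i]) (x : R) : R[i] :=
  \sum_(nu < n) phi nu x * cint0 x (fun xi => W nu xi * g xi).

Definition finite_dim_range (R : realType) (d : R)
    (T : (R -> R[i]) -> R -> R[i]) : Prop :=
  exists (m : nat) (h : 'I_m -> R -> R[i]),
    forall g, L2_on d g ->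
      exists c : 'I_m -> R[i],
        {ae (@lebesgue_measure R), forall x, `[0%R, d]%classic x ->
           T g x = \sum_(i < m) c i * h i x}.

From HB Require Import structures.
From mathcomp Require Import all_boot all_order all_algebra.
From mathcomp Require Import all_classical all_reals.
From mathcomp Require Import topology normedtype sequences measure
  lebesgue_measure lebesgue_integral.
From mathcomp Require Import complex.
From mathcomp Require Import numfun measurable_realfun.
From mathcomp Require Import ring lra zify.

(* If the range of R were spanned, up to null sets, by h_1, ..., h_m, consider the
   test functions 1_(p,q] with 0 < p < q: R 1_(p,q] vanishes on [0,p] and equals
   sum_nu phi_nu(x) int_p^q W_nu on [q,d].  For every u in (0,d] some 0 < p < q < u
   make R 1_(p,q] not a.e. zero on (p,u]: otherwise, by continuity, that combination
   vanishes on [q,u] for all small p < q; for fixed x the continuous function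
   t |-> sum_nu phi_nu(x) W_nu(t) then has zero integral over every (p,q] in (0,x],
   so it vanishes at t = 0, i.e. sum_nu W_nu(0) phi_nu = 0 near 0, which contradicts
   linear independence since W_n(0) = 1.  Iterating from u = d yields
   d = s_0 > s_1 > ... and f_k = R 1_(s_(k+1), q_k] that vanish left of s_(k+1) but
   not a.e. on (s_(k+1), s_k]; such a staircase is linearly independent, whereas
   f_0, ..., f_m lie in the span of h_1, ..., h_m. *)

Set Implicit Arguments.
Unset Strict Implicit.
Unset Printing Implicit Defensive.

Import Order.TTheory GRing.Theory Num.Theory.
Local Open Scope ring_scope.

Lemma near_span_lin_dep (K : fieldType) (T : Type) (F : set_system T) {FF : Filter F}
    (D : set T) (m : nat) (h : 'I_m -> T -> K) (f : 'I_m.+1 -> T -> K) :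
  (forall k, exists c : 'I_m -> K,
     \forall x \near F, D x -> f k x = \sum_(i < m) c i * h i x) ->
  exists a : 'I_m.+1 -> K, (exists k, a k != 0) /\
     \forall x \near F, D x -> \sum_(k < m.+1) a k * f k x = 0.
Proof.
move=> /choice[c hc].
pose X := [tuple \row_i c k i | k < m.+1].
have notfree : ~~ free X.
  apply/negP => /eqP dimX; have := dimvS (subvf <<X>>).
  by rewrite dimvf dim_matrix dimX size_tuple mul1r ltnn.
have [a aX0 [k ak]] : exists2 a : 'I_m.+1 -> K,
    \sum_(k < m.+1) a k *: X`_k = 0 & exists k, a k != 0.
  apply: contrapT => nodep; move/negP: notfree; apply; apply/freeP => a aX0 k.
  by apply/eqP/negPn/negP => ak; apply: nodep; exists a => //; exists k.
exists a; split; first by exists k.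
apply: filterS (filter_forall _ hc) => x hx Dx.
under eq_bigr => j _ do rewrite hx // mulr_sumr.
rewrite exchange_big /=; apply: big1 => i _.
have /rowP/(_ i) := aX0; rewrite !mxE summxE => aXi.
under eq_bigr => j _ do rewrite mulrA.
rewrite -mulr_suml -[RHS](mul0r (h i x)) -[0 in RHS]aXi; congr (_ * _).
by apply: eq_bigr => j _; rewrite -tnth_nth tnth_mktuple !mxE.
Qed.

Lemma near_triangular_free (K : idomainType) (T : Type) (F : set_system T)
    {FF : Filter F} (N : nat) (f : 'I_N -> T -> K) (A : 'I_N -> set T)
    (a : 'I_N -> K) :
  (forall j k : 'I_N, (j < k)%N -> forall x, A k x -> f j x = 0) ->
  (forall k, ~ \forall x \near F, A k x -> f k x = 0) ->
  (forall k, \forall x \near F, A k x -> \sum_(j < N) a j * f j x = 0) ->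
  forall k, a k = 0.
Proof.
move=> lower nz comb k; have [t] := ubnP (N - k); elim: t k => // t IH k kt.
apply: contrapT => /eqP ak; apply: (nz k); apply: filterS (comb k) => x sum0 Ax.
have others : forall j, j != k -> a j * f j x = 0.
  move=> j jk; have [jk'|kj] := ltnP j k.
    by rewrite (lower j k jk' x Ax) mulr0.
  rewrite IH ?mul0r //; have : (k < j)%N by rewrite ltn_neqAle eq_sym jk kj.
  by move: (ltn_ord j) kt; lia.
move: (sum0 Ax); rewrite (bigD1 k) //= big1 ?addr0 // => /eqP.
by rewrite mulf_eq0 (negbTE ak) => /eqP.
Qed.

Lemma choice_sequence (T : Type) (U : set T) (P : T -> T -> T -> Prop) (d : T) :
  U d -> (forall u, U u -> exists p q, U p /\ P u p q) ->
  exists s q : nat -> T, s 0%N = d /\ forall k, U (s k) /\ P (s k) (s k.+1) (q k).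
Proof.
move=> Ud step.
(* Choose on pairs (s k, q k.-1). *)
have next (x : T * T) : {y : T * T | U x.1 -> U y.1 /\ P x.1 y.1 y.2}.
  apply: cid; have [/step[p [q h]]|nUx] := pselect (U x.1); first by exists (p, q).
  by exists x.
have [f [f0 hf]] := dependent_choice next (d, d).
have Uf k : U (f k).1 by elim: k => [|k IH]; [rewrite f0 | case: (hf k IH)].
exists (fun k => (f k).1), (fun k => (f k.+1).2); split; first by rewrite f0.
by move=> k; split; [exact: Uf | case: (hf k (Uf k))].
Qed.

(* The library's hint for this instance does not fire on [lebesgue_measure]. *)
#[local] Instance ae_lebesgue_filter (R : realType) :
  Filter (almost_everywhere (@lebesgue_measure R)) := ae_filter_ringOfSetsType _.

Section Analysis.
Import numFieldNormedType.Exports.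
Local Open Scope classical_set_scope.
Variable R : realType.
Notation mu := (@lebesgue_measure R).
Implicit Types (f g : R -> R[i]) (a b : R).

Lemma continuous_within_itv_integrable (h : R -> R) a b (D : set R) :
  {within `[a, b], continuous h} -> measurable D -> D `<=` `[a, b] ->
  mu.-integrable D (EFin \o h).
Proof.
move=> hc mD Dab; apply: (@integrableS _ _ _ mu `[a, b]) => //.
apply: continuous_compact_integrable => //; exact: segment_compact.
Qed.

Lemma Rintegral_itv_near_cst (h : R -> R) (c e p q : R) : p < q ->
  mu.-integrable `]p, q] (EFin \o h) ->
  (forall t, p < t <= q -> `|h t - c| <= e) ->
  `|\int[mu]_(t in `]p, q]) h t - c * (q - p)| <= e * (q - p).
Proof.
move=> pq ih hb.
have mI : measurable (`]p, q] : set R) by exact: measurable_itv.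
have icst k : mu.-integrable `]p, q] (EFin \o cst k).
  apply: (continuous_within_itv_integrable (a := p) (b := q)) => //.
    exact/continuous_subspaceT/cst_continuous.
  by apply: subset_itvr; rewrite bnd_simp.
have muI : fine (mu `]p, q]) = q - p.
  by rewrite lebesgue_measure_itv /= lte_fin pq.
have intcst k : \int[mu]_(t in `]p, q]) k = k * (q - p).
  by rewrite Rintegral_cst // muI.
have hb' t : `]p, q] t -> c - e <= h t <= c + e.
  by rewrite /= in_itv /= => /hb; rewrite ler_distl.
rewrite ler_distl -mulrBl -mulrDl -!intcst.
by apply/andP; split; apply: le_Rintegral => //; try exact: icst;
  move=> t /hb' /andP[].
Qed.

Lemma Rintegral_itv_eq0_left (h : R -> R) a b : a < b ->
  {within `[a, b], continuous h} ->
  (forall p q, a < p -> p < q -> q <= b -> \int[mu]_(t in `]p, q]) h t = 0) ->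
  h a = 0.
Proof.
move=> ab hc h0; apply/eqP; rewrite -normr_le0.
apply/ler_addgt0Pr => e e0; rewrite add0r.
have [_ + _] := (continuous_within_itvP _ ab).1 hc.
move=> /cvgrPdist_le /(_ e e0) [δ /= δ0 near_a].
pose q := Order.min (a + δ / 2) b; pose p := (a + q) / 2.
have aq : a < q by rewrite lt_min ab andbT ltrDl divr_gt0.
have qb : q <= b by rewrite ge_min lexx orbT.
have [ap pq] : a < p /\ p < q by rewrite /p; split; lra.
have hb t : p < t <= q -> `|h t - h a| <= e.
  have qa : q <= a + δ / 2 by rewrite ge_min lexx.
  move=> /andP[pt tq]; rewrite distrC; apply: near_a => /=; last by lra.
  by rewrite ltr_distlC; apply/andP; split; lra.
have ih : mu.-integrable `]p, q] (EFin \o h).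
  apply: (continuous_within_itv_integrable hc) => //.
  by apply: subset_itv; rewrite bnd_simp // ltW.
have := Rintegral_itv_near_cst pq ih hb; rewrite h0 // sub0r normrN normrM.
by rewrite [`|q - p|]gtr0_norm ?subr_gt0 // ler_pM2r ?subr_gt0.
Qed.

Lemma ccont_on_subitv a b a' b' f : a <= a' -> b' <= b ->
  ccont_on a b f -> ccont_on a' b' f.
Proof.
move=> aa' b'b hf x hx e e0.
have sub y : a' <= y <= b' -> a <= y <= b.
  by case/andP=> a'y yb'; rewrite (le_trans aa' a'y) (le_trans yb' b'b).
have [δ δ0 hδ] := hf x (sub x hx) e e0.
by exists δ => // y /sub; exact: hδ.
Qed.

Lemma ccont_on_cst a b (c : R[i]) : ccont_on a b (fun=> c).
Proof. by move=> x _ e e0; exists 1 => // y _ _; rewrite subrr normr0 ltcR. Qed.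

Lemma ccont_onD a b f g : ccont_on a b f -> ccont_on a b g ->
  ccont_on a b (fun x => f x + g x).
Proof.
move=> hf hg x hx e e0; have e20 : 0 < e / 2 by rewrite divr_gt0.
have [δf δf0 hδf] := hf x hx _ e20; have [δg δg0 hδg] := hg x hx _ e20.
exists (Num.min δf δg) => [|y hy]; first by rewrite lt_min δf0 δg0.
rewrite lt_min => /andP[yf yg]; rewrite opprD addrACA.
rewrite (le_lt_trans (ler_normD _ _)) // [e](splitr e) rmorphD ltrD //.
  exact: hδf.
exact: hδg.
Qed.

Lemma ccont_onZ a b (c : R[i]) f : ccont_on a b f ->
  ccont_on a b (fun x => c * f x).
Proof.
move=> hf x hx e e0.
pose k := Num.sqrt (complex.Re c ^+ 2 + complex.Im c ^+ 2).
have k1 : 0 < k + 1 by rewrite ltr_wpDl ?sqrtr_ge0.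
have [δ δ0 hδ] := hf x hx _ (divr_gt0 e0 k1).
exists δ => // y hy yx; rewrite -mulrBr normrM normc_def -/k.
apply: (le_lt_trans (y := (k + 1)%:C%C * `|f y - f x|)).
  by rewrite ler_wpM2r // lecR lerDl.
rewrite -[e](divfK (lt0r_neq0 k1)) rmorphM [X in _ < X]mulrC.
by rewrite ltr_pM2l ?hδ // ltcR.
Qed.

Lemma ccont_on_sum a b (I : Type) (s : seq I) (c : I -> R[i])
    (F : I -> R -> R[i]) :
  (forall i, ccont_on a b (F i)) ->
  ccont_on a b (fun x => \sum_(i <- s) c i * F i x).
Proof.
move=> hF; elim: s => [|i s IH].
  by under [X in ccont_on _ _ X]funext do rewrite big_nil; exact: ccont_on_cst.
under [X in ccont_on _ _ X]funext do rewrite big_cons.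
by apply: ccont_onD => //; exact: ccont_onZ.
Qed.

Lemma ccont_on_Re a b f : ccont_on a b f ->
  {within `[a, b], continuous (fun x => complex.Re (f x))}.
Proof.
move=> hf; apply/subspace_continuousP => x /= hx.
apply/cvgrPdist_lt => e e0; rewrite near_withinE.
have [δ δ0 hδ] := hf x (hx : a <= x <= b) e e0.
near=> y => hy.
have : `|y - x| < δ by near: y; exists δ => // y /=; rewrite distrC.
move=> /(hδ y hy) fyx; rewrite -ltcR; apply: le_lt_trans fyx.
by rewrite (le_trans _ (normc_ge_Re (f y - f x))) // raddfB lecR distrC.
Unshelve. all: end_near.
Qed.

Lemma ccont_on_Im a b f : ccont_on a b f ->
  {within `[a, b], continuous (fun x => complex.Im (f x))}.
Proof.
move=> /(ccont_onZ (- 'i%C)) /ccont_on_Re.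
suff -> : (fun x => complex.Re (- 'i%C * f x)) = (fun x => complex.Im (f x)) by [].
by apply: funext => x; case: (f x) => u v /=; rewrite oppr0 mul0r sub0r mulN1r opprK.
Qed.

Definition cintegral (D : set R) f : R[i] :=
  ((\int[mu]_(t in D) complex.Re (f t))%:C
   + 'i * (\int[mu]_(t in D) complex.Im (f t))%:C)%C.

Definition cintegrable (D : set R) f : Prop :=
  mu.-integrable D (EFin \o (fun t => complex.Re (f t))) /\
  mu.-integrable D (EFin \o (fun t => complex.Im (f t))).

Lemma ccont_on_cintegrable a b f (D : set R) : ccont_on a b f ->
  measurable D -> D `<=` `[a, b] -> cintegrable D f.
Proof.
move=> hf mD Dab.
split; apply: (continuous_within_itv_integrable (a := a) (b := b)) => //.
  exact: ccont_on_Re.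
exact: ccont_on_Im.
Qed.

Lemma cintegralD (D : set R) f g : measurable D ->
  cintegrable D f -> cintegrable D g ->
  cintegral D (fun t => f t + g t) = cintegral D f + cintegral D g.
Proof.
move=> mD [fRe fIm] [gRe gIm]; rewrite /cintegral.
under eq_Rintegral do rewrite raddfD.
under [X in (_ + _ * X%:C)%C]eq_Rintegral do rewrite raddfD.
by rewrite !RintegralD // !rmorphD /=; ring.
Qed.

Lemma cintegralZ (D : set R) (c : R[i]) f : measurable D -> cintegrable D f ->
  cintegral D (fun t => c * f t) = c * cintegral D f.
Proof.
move=> mD [fRe fIm]; rewrite /cintegral.
have iZ k (h : R -> R) : mu.-integrable D (EFin \o h) ->
    mu.-integrable D (EFin \o (fun t => k * h t)).
  have -> : EFin \o (fun t => k * h t) = (fun t => k%:E * (EFin \o h) t)%E.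
    by apply: funext => t; rewrite /= EFinM.
  exact: integrableZl.
case: c => cr ci.
have ReM t : complex.Re ((cr +i* ci)%C * f t) =
    cr * complex.Re (f t) - ci * complex.Im (f t) by case: (f t).
have ImM t : complex.Im ((cr +i* ci)%C * f t) =
    cr * complex.Im (f t) + ci * complex.Re (f t) by case: (f t).
under eq_Rintegral do rewrite ReM.
under [X in (_ + _ * X%:C)%C]eq_Rintegral do rewrite ImM.
rewrite RintegralB ?RintegralD ?iZ // !RintegralZl //.
by apply/eqP; rewrite eq_complex /=; apply/andP; split; apply/eqP; ring.
Qed.

Lemma cintegral_sum a b (D : set R) (I : Type) (s : seq I) (c : I -> R[i])
    (F : I -> R -> R[i]) :
  measurable D -> D `<=` `[a, b] -> (forall i, ccont_on a b (F i)) ->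
  cintegral D (fun t => \sum_(i <- s) c i * F i t)
  = \sum_(i <- s) c i * cintegral D (F i).
Proof.
move=> mD Dab hF; elim: s => [|i s IH].
  under eq_fun do rewrite big_nil.
  by rewrite big_nil /cintegral /= !Rintegral_cst // !mul0r mulr0 addr0.
under eq_fun do rewrite big_cons.
rewrite big_cons cintegralD ?cintegralZ ?IH //; apply: ccont_on_cintegrable mD Dab.
- exact: hF.
- exact: ccont_onZ.
- exact: ccont_on_sum.
Qed.

Lemma cintegral_itv_eq0_left a b f : a < b -> ccont_on a b f ->
  (forall p q, a < p -> p < q -> q <= b -> cintegral `]p, q] f = 0) -> f a = 0.
Proof.
move=> ab hf h0.
have h0' p q : a < p -> p < q -> q <= b ->
    \int[mu]_(t in `]p, q]) complex.Re (f t) = 0 /\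
    \int[mu]_(t in `]p, q]) complex.Im (f t) = 0.
  move=> ap pq qb; move: (h0 p q ap pq qb) => /eqP; rewrite eq_complex /=.
  rewrite !mul0r !mul1r subr0 !add0r addr0.
  by move=> /andP[/eqP -> /eqP ->].
rewrite [f a]complexE (Rintegral_itv_eq0_left ab (ccont_on_Re hf)).
  rewrite (Rintegral_itv_eq0_left ab (ccont_on_Im hf)) ?mulr0 ?addr0 //.
  by move=> p q ap pq qb; case: (h0' p q ap pq qb).
by move=> p q ap pq qb; case: (h0' p q ap pq qb).
Qed.

Lemma ccont_on_ae_eq0 a b f : a < b -> ccont_on a b f ->
  {ae mu, forall x, `]a, b[ x -> f x = 0} -> forall x, a <= x <= b -> f x = 0.
Proof.
move=> ab hf [N [mN N0 sN]] x hx; apply: contrapT => fx0.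
have [e e0 fxe] : exists2 e : R, 0 < e & `|f x| = e%:C%C.
  rewrite normc_def; eexists; last reflexivity.
  by rewrite -ltcR -normc_def normr_gt0; apply/eqP.
have [δ δ0 hδ] := hf x hx e e0.
pose l := Num.max a (x - δ); pose r := Num.min b (x + δ).
have lr : l < r.
  by rewrite /l /r lt_min !gt_max; case/andP: hx => ax xb; apply/and3P; split; lra.
have sJ : `]l, r[ `<=` N.
  move=> y; rewrite /= in_itv /= gt_max lt_min.
  move=> /andP[/andP[ay xδy] /andP[yb yxδ]].
  apply: sN => /= fy0; have hy : a <= y <= b by rewrite !ltW.
  have yx : `|y - x| < δ by rewrite ltr_distlC; apply/andP; split; lra.
  have := hδ y hy yx; rewrite fy0 ?sub0r ?normrN ?fxe ?ltxx //.
  by rewrite /= in_itv /= ay.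
have : (mu `]l, r[ <= mu N)%E.
  by apply: (le_measure mu) sJ; rewrite inE //; exact: measurable_itv.
by rewrite N0 lebesgue_measure_itv /= lte_fin lr -EFinD lee_fin leNgt subr_gt0 lr.
Qed.

Lemma cint0_indic (x : R) (A : set R) (f : R -> R[i]) :
  cint0 x (fun t => f t * \1_A t) = cintegral (`[0, x] `&` A) f.
Proof.
rewrite /cint0 /cintegral !Rintegral_mkcondr.
by congr (_%:C + 'i * _%:C)%C; apply: eq_Rintegral => t _;
  rewrite indicE /patch; case: (t \in A); rewrite ?mulr1 ?mulr0.
Qed.

Lemma L2_on_indic (d p q : R) : L2_on d \1_`]p, q].
Proof.
have ReE : (fun x => complex.Re (\1_`]p, q] x : R[i])) = \1_`]p, q].
  by apply: funext => x; rewrite !indicE; case: (_ \in _).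
have ImE : (fun x => complex.Im (\1_`]p, q] x : R[i])) = cst 0.
  by apply: funext => x; rewrite !indicE; case: (_ \in _).
rewrite /L2_on ReE ImE; split; first exact: measurable_indic.
split; first exact: measurable_cst.
have -> : (fun x => (complex.Re (\1_`]p, q] x : R[i]) ^+ 2
                     + complex.Im (\1_`]p, q] x : R[i]) ^+ 2)%:E)
          = (fun x => (\1_`]p, q] x)%:E :> \bar R).
  apply: funext => x; rewrite !indicE.
  by case: (_ \in _); rewrite /= ?expr1n ?expr0n addr0.
rewrite integral_indic //; apply: (le_lt_trans (y := mu `[0, d])).
  by apply: (le_measure mu) (@subIsetr _ _ _); rewrite inE //; apply: measurableI.
by rewrite lebesgue_measure_itv; case: ifP => _ //=; exact: ltry.
Qed.

Section Volterra.
Variables (d : R) (n : nat) (phi W : 'I_n -> R -> R[i]).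
Hypotheses (hphi : forall nu, ccont_on 0 d (phi nu))
  (hW : forall nu, ccont_on 0 d (W nu)).

Lemma Rop_indic_le (p q x : R) : x <= p -> Rop phi W \1_`]p, q] x = 0.
Proof.
move=> xp; apply: big1 => nu _; rewrite cint0_indic.
suff -> : `[0, x] `&` `]p, q] = set0.
  by rewrite /cintegral !Rintegral_set0 mulr0 addr0 mulr0.
apply/seteqP; split => t //=; rewrite !in_itv /= => -[/andP[_ tx] /andP[pt _]].
by move: (lt_le_trans pt (le_trans tx xp)); rewrite ltxx.
Qed.

Lemma Rop_indic_ge (p q x : R) : 0 <= p -> q <= x ->
  Rop phi W \1_`]p, q] x = \sum_(nu < n) phi nu x * cintegral `]p, q] (W nu).
Proof.
move=> p0 qx; apply: eq_bigr => nu _; rewrite cint0_indic setIidr //.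
by apply: subset_itv; rewrite bnd_simp // (le_trans p0).
Qed.

Lemma Rop_indic_ae0_tail (p q u : R) : 0 < p -> p < q -> q < u -> u <= d ->
  {ae mu, forall x, `]p, u] x -> Rop phi W \1_`]p, q] x = 0} ->
  forall x, q <= x <= u -> \sum_(nu < n) cintegral `]p, q] (W nu) * phi nu x = 0.
Proof.
move=> p0 pq qu ud hae.
have hc : ccont_on q u (fun x => \sum_(nu < n) cintegral `]p, q] (W nu) * phi nu x).
  apply: ccont_on_sum => nu; apply: ccont_on_subitv (hphi nu) => //.
  by rewrite ltW // (lt_trans p0).
apply: (ccont_on_ae_eq0 qu hc); apply: filterS hae => x hx.
rewrite /= in_itv /= => /andP[qx xu]; rewrite -[RHS](hx _); last first.
  by rewrite /= in_itv /= (lt_trans pq qx) ltW.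
by rewrite Rop_indic_ge ?ltW //; apply: eq_bigr => nu _; rewrite mulrC.
Qed.

Lemma sum_W0_phi_eq0 (x : R) : 0 < x -> x <= d ->
  (forall p q, 0 < p -> p < q -> q <= x ->
     \sum_(nu < n) phi nu x * cintegral `]p, q] (W nu) = 0) ->
  \sum_(nu < n) W nu 0 * phi nu x = 0.
Proof.
move=> x0 xd h0.
have hc : ccont_on 0 x (fun t => \sum_(nu < n) phi nu x * W nu t).
  by apply: ccont_on_sum => nu; apply: ccont_on_subitv (hW nu).
under eq_bigr do rewrite mulrC.
apply: (cintegral_itv_eq0_left x0 hc) => p q p0 pq qx.
rewrite (cintegral_sum (a := 0) (b := x)) ?h0 //.
- by apply: subset_itv; rewrite bnd_simp // ltW.
- by move=> nu; apply: ccont_on_subitv (hW nu).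
Qed.

Hypotheses (hn : (0 < n)%N) (hWn : forall nu : 'I_n, (nu.+1 = n)%N -> W nu 0 = 1)
  (hind : forall d1 : R, 0 < d1 <= d -> lin_indep_on 0 d1 phi).

Lemma Rop_indic_not_ae0 (u : R) : 0 < u <= d ->
  exists p q, [/\ 0 < p, p < q, q < u &
    ~ {ae mu, forall x, `]p, u] x -> Rop phi W \1_`]p, q] x = 0}].
Proof.
case/andP=> u0 ud; apply: contrapT => none.
have vanish p q : 0 < p -> p < q -> q < u ->
    {ae mu, forall x, `]p, u] x -> Rop phi W \1_`]p, q] x = 0}.
  by move=> p0 pq qu; apply: contrapT => nae; apply: none; exists p, q.
have sum0_open x : 0 < x < u -> \sum_(nu < n) W nu 0 * phi nu x = 0.
  case/andP=> x0 xu; apply: sum_W0_phi_eq0 => // [|p q p0 pq qx].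
    exact: le_trans (ltW xu) ud.
  have qu : q < u := le_lt_trans qx xu.
  under eq_bigr do rewrite mulrC.
  by apply: (Rop_indic_ae0_tail p0 pq qu ud (vanish _ _ p0 pq qu)); rewrite qx ltW.
have u2 : 0 < u / 2 <= d by apply/andP; split; lra.
have sum0 : forall x, 0 <= x <= u / 2 -> \sum_(nu < n) W nu 0 * phi nu x = 0.
  apply: (ccont_on_ae_eq0 (a := 0) (b := u / 2)).
  - by case/andP: u2.
  - by apply: ccont_on_sum => nu; apply: ccont_on_subitv (hphi nu); case/andP: u2.
  apply: aeW => y; rewrite /= in_itv /= => /andP[y0 yu2]; apply: sum0_open.
  by rewrite y0 /=; lra.
have last_lt : (n.-1 < n)%N by rewrite ltn_predL.
move: (hind u2) => /(_ (fun nu => W nu 0) sum0 (Ordinal last_lt)).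
by rewrite hWn ?prednK //; exact/eqP/oner_neq0.
Qed.

Hypothesis hd : 0 < d.

Lemma Rop_indic_staircase : exists s q : nat -> R, forall k,
  [/\ 0 < s k.+1, s k.+1 < q k, q k < s k, s k <= d &
    ~ {ae mu, forall x, `]s k.+1, s k] x -> Rop phi W \1_`]s k.+1, q k] x = 0}].
Proof.
pose U u := 0 < u <= d.
pose P u p q := [/\ 0 < p, p < q, q < u &
  ~ {ae mu, forall x, `]p, u] x -> Rop phi W \1_`]p, q] x = 0}].
have [s [q [_ hs]]] : exists s q : nat -> R,
    s 0%N = d /\ forall k, U (s k) /\ P (s k) (s k.+1) (q k).
  apply: (choice_sequence (U := U) (P := P)) => [|u Uu]; first by rewrite /U hd lexx.
  have [p [q [p0 pq qu nae]]] := Rop_indic_not_ae0 Uu.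
  exists p, q; split=> //; rewrite /U p0 (le_trans _ (proj2 (andP Uu))) //.
  by rewrite ltW // (lt_trans pq).
by exists s, q => k; case: (hs k) => /andP[_ skd] [sk0 sq qs nae]; split.
Qed.

End Volterra.

End Analysis.

Theorem lemma2 (R : realType) (d : R) (n : nat) (phi W : 'I_n -> R -> R[i])
  (hd : 0 < d)
  (hphi : forall nu, ccont_on 0 d (phi nu))
  (hW : forall nu, ccont_on 0 d (W nu))
  (hn : (0 < n)%N)
  (hWn : forall nu : 'I_n, (nu.+1 = n)%N -> W nu 0 = 1)
  (hind : forall d1 : R, 0 < d1 <= d -> lin_indep_on 0 d1 phi) :
  ~ finite_dim_range d (Rop phi W).
Proof.
move=> [m [h hfin]].
have [s [q hs]] := Rop_indic_staircase hphi hW hn hWn hind hd.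
have s_anti : nonincreasing_seq s.
  apply/nonincreasing_seqP => k; have [_ sq qs _ _] := hs k.
  by rewrite ltW // (lt_trans sq).
pose f (k : 'I_m.+1) := Rop phi W \1_`]s k.+1, q k].
have [a [[k ak] comb]] := near_span_lin_dep (f := f)
  (fun k => hfin _ (L2_on_indic _ _ _)).
apply: (negP ak); apply/eqP.
apply: (near_triangular_free (F := almost_everywhere (@lebesgue_measure R))
  (A := fun k : 'I_m.+1 => `]s k.+1, s k]%classic) (f := f)) => [j i ji x|i|i].
- rewrite /= in_itv /= => /andP[_ xs]; apply: Rop_indic_le.
  by rewrite (le_trans xs) // s_anti.
- by have [] := hs i.
- apply: filterS comb => x + xA; apply; move: xA; rewrite /= !in_itv /=.
  have [si0 _ _ sid _] := hs i.
  by move=> /andP[lx xu]; rewrite (le_trans xu sid) (le_trans (ltW si0) (ltW lx)).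
Qed.
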